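(* Let $N,h,Q\in\mathbb N$ with $h\to\infty$, $h=o(N)$ and $Q\ll N$ as $N\to\infty$. Let $g:\mathbb N\to\mathbb R$ with $g(q)=0$ for all $q>Q$, and let $f=g\ast\mathbf 1$, i.e. $f(n)=\sum_{d\mid n}g(d)$. Then for every nonzero integer $a\le N$, $$\mathcal C_f(a)=\sum_{\ell\mid a}\ \sum_{\substack{d,q\ge1\\(d,q)=1}}g(\ell d)g(\ell q)\frac1q\left(\left\lfloor\frac{2N}{\ell d}\right\rfloor-\left\lfloor\frac{N}{\ell d}\right\rfloor\right)+R_f(a),$$ where $$R_f(a)=\sum_{\ell\mid a}\ \sum_{\substack{d,q\ge1\\(d,q)=1}}g(\ell d)g(\ell q)\frac1q\sum_{j=1}^{q-1}e_q(-ja/\ell)\sum_{N/(\ell d)<m\le 2N/(\ell d)}e_q(jdm).$$ Moreover, for every even function $K:\mathbb Z\to\mathbb C$ supported in $[-2h,2h]$ with $K(0)=2h$, and $N$ sufficiently large (so that $2h\le N$), $$\sum_{a\ne0}K(a)R_f(a)+K(0)\,\mathcal C_f(0)=\sum_{\ell\le 2h}\ \sum_{\substack{d,q\ge1\\(d,q)=1}}g(\ell d)g(\ell q)\frac1q\sum_{j=1}^{q-1}\ \sum_{N/(\ell d)<m\le 2N/(\ell d)}\cos\frac{2\pi jdm}{q}\sum_{a\ne0}K(a\ell)e_q(ja)+2h\,\mathcal C_f(0).$$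
   Context: $e(\theta)=e^{2\pi i\theta}$ and $e_q(m)=e(m/q)$. $\lfloor\cdot\rfloor$ is the integer part. $\ell\mid a$ ranges over positive divisors $\ell$ of $a$. The notation $n\sim N$ means $N<n\le 2N$, and for integers $a\le N$, $\mathcal C_f(a)=\sum_{n\sim N}f(n)f(n-a)$. *)

From mathcomp Require Import all_boot all_algebra.
From mathcomp Require Import complex.
From mathcomp Require Import reals trigo.
Import GRing.Theory Num.Theory.
Local Open Scope ring_scope.
Local Open Scope complex_scope.

Set Implicit Arguments.
Unset Strict Implicit.
Unset Printing Implicit Defensive.

Section Defs.
Variable R : realType.

Definition ee (x : R) : R[i] := (cos (2 * pi * x)) +i* (sin (2 * pi * x)).

Definition eq_ (q : nat) (x : R) : R[i] := ee (x / q%:R).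

Definition convf (g : nat -> R) (n : nat) : R := \sum_(d <- divisors n) g d.

(* C_f(a) = sum_{N < n <= 2N} f(n) f(n - a); here n - a is computed in int
   and is positive whenever a <= N, which is the range where it is used. *)
Definition Cf (f : nat -> R) (N : nat) (a : int) : R :=
  \sum_(N.+1 <= n < (2 * N).+1) f n * f `|n%:Z - a|%N.

(* sum over d, q >= 1 with (d,q) = 1, truncated at Q (all nonzero terms
   of the sums below have d, q <= Q since g vanishes beyond Q). *)
Definition sum_cop (Q : nat) (F : nat -> nat -> R[i]) : R[i] :=
  \sum_(1 <= d < Q.+1) \sum_(1 <= q < Q.+1 | coprime d q) F d q.

(* sum over integers m with N/(l d) < m <= 2N/(l d) (only m <= 2N can occur) *)
Definition sum_m (N l d : nat) (F : nat -> R[i]) : R[i] :=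
  \sum_(0 <= m < (2 * N).+1 |
          (N%:R / (l * d)%:R < m%:R :> R) && (m%:R <= (2 * N)%:R / (l * d)%:R :> R))
     F m.

Definition sum_nz (M : nat) (F : int -> R[i]) : R[i] :=
  \sum_(i < (2 * M).+1 | i%:Z - M%:Z != 0) F (i%:Z - M%:Z).

Definition MT (g : nat -> R) (N Q : nat) (a : int) : R[i] :=
  \sum_(l <- divisors `|a|%N) sum_cop Q (fun d q =>
     (g (l * d)%N * g (l * q)%N / q%:R *
       (((2 * N) %/ (l * d))%N%:R - (N %/ (l * d))%N%:R))%:C).

Definition Rf (g : nat -> R) (N Q : nat) (a : int) : R[i] :=
  \sum_(l <- divisors `|a|%N) sum_cop Q (fun d q =>
     (g (l * d)%N * g (l * q)%N / q%:R)%:C *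
     \sum_(1 <= j < q)
        eq_ q (- (j%:R * a%:~R) / l%:R) *
        sum_m N l d (fun m => eq_ q (j%:R * d%:R * m%:R))).

End Defs.

(* Expanding f = g * 1, C_f(a) is the sum of g(d1) g(d2) times the number of
   n in (N, 2N] with d1 | n and d2 | n - a.  That number vanishes unless
   l = gcd(d1, d2) divides a; writing d1 = l d and d2 = l q with (d, q) = 1, it
   counts the m with N < l d m <= 2N and q | d m - a/l, and detecting this
   congruence with the additive characters mod q splits it into the main term
   (trivial character) and R_f(a) (the others).  For the average against K,
   substitute a = b l, exchange the sums over a and l, and pair j with q - j:
   as K is even both give the same sum over b, and
   e_q(jdm) + e_q(-jdm) = 2 cos(2 pi jdm / q). *)

From mathcomp Require Import all_boot all_order all_algebra.
From mathcomp Require Import complex.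
From mathcomp Require Import reals trigo.
From mathcomp Require Import ring lra zify.
Import Order.TTheory GRing.Theory Num.Theory.

Set Implicit Arguments.
Unset Strict Implicit.
Unset Printing Implicit Defensive.
Local Open Scope ring_scope.
Local Open Scope complex_scope.

Section AdditiveCharacter.
Variable R : realType.

Lemma eeD (x y : R) : ee (x + y) = ee x * ee y.
Proof.
rewrite /ee mulrDr cosD sinD.
by apply/eqP; rewrite eq_complex /= eqxx /= addrC eqxx.
Qed.

Lemma ee0 : ee (0 : R) = 1.
Proof. by rewrite /ee mulr0 cos0 sin0. Qed.

Lemma ee_int (k : int) : ee (k%:~R : R) = 1.
Proof.
have ee_nat (n : nat) : ee (n%:R : R) = 1.
  elim: n => [|n IHn]; first exact: ee0.
  by rewrite -natr1 eeD IHn /ee mulr1 mulr_natl cos2pi sin2pi mul1r.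
case: k => n; first exact: ee_nat.
have eeNS : ee (- n.+1%:R : R) * ee n.+1%:R = 1 by rewrite -eeD addNr ee0.
by rewrite NegzE mulrNz; rewrite ee_nat mulr1 in eeNS.
Qed.

Lemma ee_natM (j : nat) (x : R) : ee (j%:R * x) = ee x ^+ j.
Proof.
elim: j => [|j IHj]; first by rewrite mul0r ee0 expr0.
by rewrite -natr1 mulrDl mul1r eeD IHj exprSr.
Qed.

Lemma cos2pi_lt1 (t : R) : 0 < t < 1 -> cos (2 * pi * t) < 1.
Proof.
move=> /andP[t_gt0 t_lt1].
have pi_gt0 : (0 : R) < pi := pi_gt0 _.
have cos_lt1 (u : R) : 0 < u <= pi -> cos u < 1.
  move=> /andP[u_gt0 u_le_pi]; rewrite -cos0 ltr_cos // in_itv /=.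
    by rewrite lexx ltW.
  by rewrite ltW.
have two_pi_t : 2 * pi * t < 2 * pi.
  by rewrite -[ltRHS]mulr1 ltr_pM2l // mulr_gt0.
case: (lerP (2 * pi * t) pi) => [le_pi|gt_pi].
  by apply: cos_lt1; rewrite le_pi !mulr_gt0.
rewrite -cosN -cosD2pi; apply: cos_lt1; rewrite -mulr_natl; lra.
Qed.

Lemma ee_neq1 (t : R) : 0 < t < 1 -> ee t != 1.
Proof.
move=> /cos2pi_lt1 cos_lt1; apply/negP => /eqP ee1.
by move: cos_lt1; rewrite [cos _](congr1 (@complex.Re R) ee1) ltxx.
Qed.

Lemma ee_frac_neq1 (q : nat) (k : int) : (0 < q)%N -> ~~ (q%:Z %| k)%Z ->
  ee (k%:~R / q%:R : R) != 1.
Proof.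
move=> q_gt0 qNk; have qz : q%:Z != 0 by rewrite -lt0n.
have qU : (q%:~R : R) \is a GRing.unit by rewrite unitfE intr_eq0.
rewrite {1}(divz_eq k q%:Z) intrD mulrDl eeD intrM mulrK // ee_int mul1r.
have := modz_ge0 k qz; have := ltz_mod k qz.
have : (k %% q%:Z)%Z != 0 by apply: contra qNk => /eqP/dvdz_mod0P.
case: (k %% q%:Z)%Z => // r r_neq0 r_lt_q _; apply: ee_neq1.
rewrite divr_gt0 ?ltr0n ?lt0n //= ltr_pdivrMr ?ltr0n // mul1r.
by rewrite [_%:~R]/(r%:R) ltr_nat; move: r_lt_q; rewrite /Num.norm /=; lia.
Qed.

Lemma sum_ee_dvdz (q : nat) (k : int) : (0 < q)%N ->
  \sum_(0 <= j < q) ee (j%:R * k%:~R / q%:R : R) =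
    if (q%:Z %| k)%Z then (q%:R : R[i]) else 0.
Proof.
move=> q_gt0; have qU : (q%:R : R) \is a GRing.unit by rewrite unitfE pnatr_eq0 -lt0n.
under eq_bigr do rewrite -mulrA ee_natM.
case: ifPn => [/dvdzP[c ->]|qNk].
  rewrite intrM mulrK; last by rewrite unitfE intr_eq0 -lt0n.
  by under eq_bigr do rewrite ee_int expr1n; rewrite sumr_const_nat subn0.
set z := ee _; have zq : z ^+ q = 1 by rewrite -ee_natM mulrCA divff ?mulr1 ?ee_int -?unitfE.
have := subrX1 z q; rewrite zq subrr => /esym/eqP.
by rewrite mulf_eq0 subr_eq0 (negbTE (ee_frac_neq1 q_gt0 qNk)) big_mkord => /eqP.
Qed.

End AdditiveCharacter.

Lemma big_reindex_seq (I J : eqType) (V : nmodType) (s : seq I) (t : seq J)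
    (P : pred I) (Q : pred J) (phi : I -> J) (F : J -> V) :
  uniq s -> uniq t ->
  {in [pred i | (i \in s) && P i] &, injective phi} ->
  (forall i, i \in s -> P i -> (phi i \in t) && Q (phi i)) ->
  (forall j, j \in t -> Q j -> exists2 i, (i \in s) && P i & j = phi i) ->
  \sum_(i <- s | P i) F (phi i) = \sum_(j <- t | Q j) F j.
Proof.
move=> s_uniq t_uniq phi_inj phi_in phi_onto.
rewrite -[LHS]big_filter -[RHS]big_filter -(big_map phi xpredT F).
apply: perm_big; apply: uniq_perm; rewrite ?filter_uniq //.
  rewrite map_inj_in_uniq ?filter_uniq // => x y.
  by rewrite !mem_filter => /andP[Px sx] /andP[Py sy]; apply: phi_inj; rewrite inE ?sx ?Px ?sy ?Py.
move=> j; rewrite mem_filter; apply/mapP/idP => [[i si_f ->]|/andP[Qj tj]].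
  by move: si_f; rewrite mem_filter => /andP[Pi si]; rewrite andbC; apply: phi_in.
by have [i /andP[si Pi] ->] := phi_onto j tj Qj; exists i; rewrite // mem_filter Pi si.
Qed.

Section Counting.
Variable R : realType.
Local Notation C := R[i].

Definition count_dvd2 (N : nat) (a : int) (d1 d2 : nat) : C :=
  \sum_(N.+1 <= n < (2 * N).+1 | (d1 %| n)%N && (d2 %| `|n%:Z - a|)%N) 1.

Lemma count_dvd2_eq0 (N : nat) (a : int) (d1 d2 : nat) :
  ~~ (gcdn d1 d2 %| `|a|)%N -> count_dvd2 N a d1 d2 = 0.
Proof.
move=> gNa; apply: big_pred0 => n; apply/negbTE/negP => /andP[d1n d2na].
apply/negP: gNa; have : ((gcdn d1 d2)%:Z %| n%:Z - (n%:Z - a))%Z.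
  by apply: rpredB; [exact: dvdn_trans (dvdn_gcdl _ _) d1n | exact: dvdn_trans (dvdn_gcdr _ _) d2na].
by rewrite opprB addrC subrK negbK.
Qed.

Lemma sum1_nat_window (T a b : nat) : (b < T)%N ->
  \sum_(0 <= m < T | (a < m <= b)%N) (1 : C) = (b - a)%:R.
Proof.
move=> b_lt_T; rewrite (eq_bigr (fun=> 1%:R)) // -natr_sum; congr _%:R.
rewrite -[(b - a)%N]subSS -[(_ - _)%N]muln1 -sum_nat_const_nat.
by rewrite [RHS](big_nat_widenl _ 0) // [RHS](big_nat_widen _ _ T).
Qed.

Lemma window_condE (N k m : nat) : (0 < k)%N ->
  ((N%:R / k%:R < m%:R :> R) && (m%:R <= (2 * N)%:R / k%:R :> R)) =
    (N < k * m <= 2 * N)%N.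
Proof.
move=> k_gt0; have k_gt0R : (0 : R) < k%:R by rewrite ltr0n.
by rewrite ltr_pdivrMr // ler_pdivlMr // -!natrM ltr_nat ler_nat mulnC.
Qed.

Lemma sum_m1 (N l d : nat) : (0 < l * d)%N ->
  sum_m N l d (fun=> 1 : C) = ((2 * N) %/ (l * d))%N%:R - (N %/ (l * d))%N%:R.
Proof.
move=> ld_gt0; rewrite /sum_m (eq_bigl (fun m => (N %/ (l * d) < m <= (2 * N) %/ (l * d))%N)).
  by rewrite sum1_nat_window ?natrB ?leq_div2r ?ltnS ?leq_div // leq_pmull.
by move=> m; rewrite window_condE // ltn_divLR // leq_divRL // mulnC.
Qed.

Lemma count_dvd2_scaled (N l d q : nat) (b : int) : (0 < l * d)%N ->
  count_dvd2 N (b * l%:Z) (l * d) (l * q) =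
    sum_m N l d (fun m => if (l * q %| `|((l * d * m)%N%:Z - b * l%:Z)%R|)%N then 1 else 0).
Proof.
move=> ld_gt0; rewrite /count_dvd2 /sum_m big_mkcondr /=.
symmetry; apply: (@big_reindex_seq _ _ _ _ _ _ _ (fun m => l * d * m)%N
  (fun n => if (l * q %| `|(n%:Z - b * l%:Z)%R|)%N then 1 else 0)); try exact: iota_uniq.
- by move=> x y _ _ /eqP; rewrite eqn_mul2l eqn0Ngt ld_gt0 => /eqP.
- move=> m; rewrite !mem_index_iota window_condE // => _ /andP[lo hi].
  by rewrite dvdn_mulr // lo ltnS hi.
move=> n; rewrite mem_index_iota => /andP[lo hi] /dvdnP[m nE].
have mldE : (l * d * m = n)%N by rewrite nE mulnC.
exists m; rewrite ?mldE // mem_index_iota window_condE // mldE.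
have m_le_n : (m <= n)%N by rewrite nE leq_pmulr.
lia.
Qed.

Lemma count_dvd2_ee (N l d q : nat) (a : int) :
  (0 < l)%N -> (0 < d)%N -> (0 < q)%N -> (l%:Z %| a)%Z ->
  count_dvd2 N a (l * d) (l * q) =
    (q%:R)^-1 * ((((2 * N) %/ (l * d))%N%:R - (N %/ (l * d))%N%:R)
      + \sum_(1 <= j < q) eq_ q (- (j%:R * a%:~R) / l%:R) *
          sum_m N l d (fun m => eq_ q (j%:R * d%:R * m%:R))).
Proof.
move=> l_gt0 d_gt0 q_gt0 /dvdzP[b ->].
have ld_gt0 : (0 < l * d)%N by rewrite muln_gt0 l_gt0.
have qR : (q%:R : R) != 0 by rewrite pnatr_eq0 -lt0n.
have lR : (l%:R : R) != 0 by rewrite pnatr_eq0 -lt0n.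
have indicatorE m : (if (l * q %| `|((l * d * m)%N%:Z - b * l%:Z)%R|)%N then 1 else 0 : C) =
    q%:R^-1 * \sum_(0 <= j < q) ee (j%:R * ((d * m)%N%:Z - b)%:~R / q%:R : R).
  rewrite sum_ee_dvdz // -(dvdz_mul2l (_ : l%:Z != 0)) -?lt0n //.
  rewrite dvdzE -PoszM mulrBr -PoszM mulnA [b * _]mulrC.
  by case: ifP; rewrite ?mulr0 ?mulVf // pnatr_eq0 -lt0n.
rewrite count_dvd2_scaled // /sum_m (eq_bigr _ (fun m _ => indicatorE m)) -mulr_sumr.
congr (_ * _); rewrite exchange_big big_ltn //=; congr (_ + _).
  by under eq_bigr do rewrite !mul0r ee0; rewrite -sum_m1.
apply: eq_bigr => j _; rewrite mulr_sumr; apply: eq_bigr => m _.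
rewrite /eq_ -eeD intrB intrM -!pmulrn natrM; congr ee.
by field; rewrite lR qR.
Qed.

End Counting.

Arguments count_dvd2 {R}.

Section DivisorSums.
Variable V : nmodType.

Lemma big_divisors_nat (M n : nat) (F : nat -> V) : (0 < n)%N ->
  (forall d, (d %| n)%N -> (M < d)%N -> F d = 0) ->
  \sum_(d <- divisors n) F d = \sum_(1 <= d < M.+1 | (d %| n)%N) F d.
Proof.
move=> n_gt0 F_supp; rewrite (bigID (fun d => (d <= M)%N)) /=.
rewrite [X in _ + X]big_seq_cond [X in _ + X]big1 ?addr0 => [|d /andP[dn d_gt_M]]; last first.
  by apply: F_supp; rewrite ?dvdn_divisors // ltnNge.
apply: (@big_reindex_seq _ _ _ _ _ _ _ id); rewrite ?divisors_uniq ?iota_uniq //.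
- move=> d; rewrite -dvdn_divisors // mem_index_iota => dn d_le_M.
  by rewrite dn (dvdn_gt0 n_gt0) // ltnS d_le_M.
move=> d; rewrite mem_index_iota => /andP[_ d_le_M] dn; exists d => //.
by rewrite -dvdn_divisors // dn -ltnS.
Qed.

Lemma sum_multiples (Q l : nat) (P : pred nat) (F : nat -> V) : (0 < l)%N ->
  (forall n, P n -> (l %| n)%N) ->
  \sum_(1 <= n < Q.+1 | P n) F n =
    \sum_(1 <= d < Q.+1 | (l * d <= Q)%N && P (l * d)%N) F (l * d)%N.
Proof.
move=> l_gt0 P_dvd; symmetry; apply: (@big_reindex_seq _ _ _ _ _ _ _ (muln l)); rewrite ?iota_uniq //.
- by move=> x y _ _ /eqP; rewrite eqn_mul2l eqn0Ngt l_gt0 => /eqP.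
- move=> d; rewrite !mem_index_iota => /andP[d_gt0 _] /andP[ld_le_Q ->].
  by rewrite muln_gt0 l_gt0 d_gt0 ltnS ld_le_Q.
move=> n; rewrite mem_index_iota => /andP[n_gt0 n_le_Q] Pn.
have /dvdnP[d nE] := P_dvd n Pn; rewrite mulnC in nE; subst n.
have d_le_ld : (d <= l * d)%N by rewrite leq_pmull.
rewrite ltnS in n_le_Q; exists d => //.
rewrite mem_index_iota Pn n_le_Q ltnS (leq_trans d_le_ld n_le_Q) !andbT.
by move: n_gt0; rewrite muln_gt0 => /andP[].
Qed.

Lemma sum_divisors_eq (A x : nat) (v : V) : (0 < A)%N ->
  \sum_(l <- divisors A | x == l) v = if (x %| A)%N then v else 0.
Proof.
move=> A_gt0; rewrite -big_filter (eq_filter (_ : _ =1 pred1 x)); last by move=> l; rewrite eq_sym.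
case: ifPn => [xA|xNA].
  by rewrite filter_pred1_uniq ?divisors_uniq ?big_seq1 // -dvdn_divisors.
rewrite big_seq big1 // => l; rewrite mem_filter => /andP[/eqP -> xdiv].
by move: xNA; rewrite dvdn_divisors // xdiv.
Qed.

Lemma sum_gcd_divisors (A Q : nat) (G : nat -> nat -> V) : (0 < A)%N ->
  \sum_(1 <= d1 < Q.+1) \sum_(1 <= d2 < Q.+1 | (gcdn d1 d2 %| A)%N) G d1 d2 =
  \sum_(l <- divisors A) \sum_(1 <= d < Q.+1 | (l * d <= Q)%N)
     \sum_(1 <= q < Q.+1 | (l * q <= Q)%N && coprime d q) G (l * d)%N (l * q)%N.
Proof.
move=> A_gt0.
transitivity (\sum_(l <- divisors A) \sum_(1 <= d1 < Q.+1)
                \sum_(1 <= d2 < Q.+1 | gcdn d1 d2 == l) G d1 d2).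
  rewrite exchange_big; apply: eq_bigr => d1 _.
  rewrite (exchange_big_dep xpredT) //; rewrite big_mkcond; apply: eq_bigr => d2 _.
  by rewrite (eq_bigl (eq_op (gcdn d1 d2))) // sum_divisors_eq.
rewrite big_seq [RHS]big_seq; apply: eq_bigr => l; rewrite -dvdn_divisors // => lA.
have l_gt0 : (0 < l)%N := dvdn_gt0 A_gt0 lA.
rewrite (bigID (dvdn l)) /= [X in _ + X]big1 ?addr0 => [|d1 ld1]; last first.
  by rewrite big_pred0 // => d2; apply: contraNF ld1 => /eqP <-; apply: dvdn_gcdl.
rewrite (sum_multiples _ _ l_gt0) //; apply: eq_big => [d|d _]; first by rewrite dvdn_mulr ?andbT.
rewrite (sum_multiples _ _ l_gt0) => [|n /eqP <-]; last exact: dvdn_gcdr.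
by apply: eq_bigl => q; rewrite -muln_gcdr -[X in (_ == X)](muln1 l) eqn_mul2l eqn0Ngt l_gt0.
Qed.

End DivisorSums.

Section Expansion.
Variable R : realType.
Local Notation C := R[i].
Variables (Q : nat) (g : nat -> R).
Hypothesis g_supp : forall q : nat, (Q < q)%N -> g q = 0.

Lemma convf_supportE (n : nat) : (0 < n)%N ->
  convf g n = \sum_(1 <= d < Q.+1 | (d %| n)%N) g d.
Proof. by move=> n_gt0; apply: big_divisors_nat => // d _; apply: g_supp. Qed.

Lemma Cf_convf_count (N : nat) (a : int) : a <= N%:Z ->
  (Cf (convf g) N a)%:C =
    \sum_(1 <= d1 < Q.+1) \sum_(1 <= d2 < Q.+1) (g d1 * g d2)%:C * count_dvd2 N a d1 d2.
Proof.
move=> a_le_N; rewrite /Cf rmorph_sum /=.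
transitivity (\sum_(N.+1 <= n < (2 * N).+1) \sum_(1 <= d1 < Q.+1) \sum_(1 <= d2 < Q.+1)
    (g d1 * g d2)%:C * (if (d1 %| n)%N && (d2 %| `|n%:Z - a|)%N then 1 else 0)).
  apply: eq_big_nat => n /andP[n_gt_N _].
  have na_gt0 : (0 < `|n%:Z - a|)%N.
    by rewrite absz_gt0 subr_eq0; apply: contraTneq a_le_N => <-; rewrite -ltNge ltz_nat.
  rewrite rmorphM !convf_supportE ?(leq_ltn_trans _ n_gt_N) // !rmorph_sum big_distrlr /=.
  rewrite big_mkcond; apply: eq_bigr => d1 _; case: (d1 %| n)%N => /=.
    rewrite big_mkcond; apply: eq_bigr => d2 _.
    by case: (d2 %| _)%N; rewrite ?mulr1 ?mulr0 ?rmorphM.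
  by rewrite big1 // => d2 _; rewrite mulr0.
rewrite exchange_big; apply: eq_bigr => d1 _; rewrite exchange_big; apply: eq_bigr => d2 _.
by rewrite -mulr_sumr /count_dvd2 [in RHS]big_mkcond.
Qed.

Lemma MT_add_Rf (N : nat) (a : int) : a != 0 ->
  MT g N Q a + Rf g N Q a =
    \sum_(l <- divisors `|a|%N) \sum_(1 <= d < Q.+1) \sum_(1 <= q < Q.+1 | coprime d q)
      (g (l * d)%N * g (l * q)%N)%:C * count_dvd2 N a (l * d) (l * q).
Proof.
move=> a_neq0; rewrite /MT /Rf /sum_cop -big_split big_seq [RHS]big_seq.
apply: eq_bigr => l; rewrite -dvdn_divisors ?absz_gt0 // => la.
have l_gt0 : (0 < l)%N by rewrite (dvdn_gt0 _ la) ?absz_gt0.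
rewrite -big_split; apply: eq_big_nat => d /andP[d_gt0 _].
rewrite -big_split big_seq_cond [RHS]big_seq_cond; apply: eq_bigr => q.
rewrite mem_index_iota => /andP[/andP[q_gt0 _] _].
rewrite count_dvd2_ee ?dvdzE //= !rmorphM rmorphB /= !rmorph_nat fmorphV /= rmorph_nat.
ring.
Qed.

Lemma sum_count_dvd2_gcd (N : nat) (a : int) : a != 0 ->
  \sum_(1 <= d1 < Q.+1) \sum_(1 <= d2 < Q.+1) (g d1 * g d2)%:C * count_dvd2 N a d1 d2 =
  \sum_(l <- divisors `|a|%N) \sum_(1 <= d < Q.+1) \sum_(1 <= q < Q.+1 | coprime d q)
     (g (l * d)%N * g (l * q)%N)%:C * count_dvd2 N a (l * d) (l * q).
Proof.
move=> a_neq0.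
transitivity (\sum_(1 <= d1 < Q.+1) \sum_(1 <= d2 < Q.+1 | (gcdn d1 d2 %| `|a|)%N)
               (g d1 * g d2)%:C * count_dvd2 N a d1 d2).
  apply: eq_bigr => d1 _; rewrite [RHS]big_mkcond; apply: eq_bigr => d2 _.
  by case: ifPn => // /count_dvd2_eq0 ->; rewrite mulr0.
rewrite sum_gcd_divisors ?absz_gt0 //; apply: eq_bigr => l _.
rewrite big_mkcond; apply: eq_bigr => d _; case: (leqP (l * d) Q) => [ld_le_Q|ld_gt_Q] /=.
  rewrite big_mkcond [RHS]big_mkcond; apply: eq_bigr => q _.
  case: (leqP (l * q) Q) => //= lq_gt_Q.
  by rewrite (g_supp lq_gt_Q) mulr0 rmorph0 mul0r if_same.
by rewrite big1 // => q _; rewrite (g_supp ld_gt_Q) mul0r rmorph0 mul0r.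
Qed.

End Expansion.

Section Averaging.
Variable R : realType.
Local Notation C := R[i].

Definition zrange (M : nat) : seq int := [seq i%:Z - M%:Z | i <- index_iota 0 (2 * M).+1].

Lemma sum_nzE (M : nat) (F : int -> C) : sum_nz M F = \sum_(a <- zrange M | a != 0) F a.
Proof.
rewrite /sum_nz -(big_mkord (fun i => i%:Z - M%:Z != 0) (fun i => F (i%:Z - M%:Z))).
by rewrite big_map.
Qed.

Lemma zrange_uniq (M : nat) : uniq (zrange M).
Proof. by rewrite map_inj_uniq ?iota_uniq // => x y /addIr []. Qed.

Lemma mem_zrange (M : nat) (a : int) : (a \in zrange M) = (`|a| <= M)%N.
Proof.
apply/mapP/idP => [[i i_in ->]|a_le_M]; first by move: i_in; rewrite mem_index_iota; lia.
by exists `|(a + M%:Z)%R|%N; rewrite ?mem_index_iota; lia.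
Qed.

Lemma sum_zrangeN (M : nat) (F : int -> C) :
  \sum_(b <- zrange M | b != 0) F (- b) = \sum_(b <- zrange M | b != 0) F b.
Proof.
apply: big_reindex_seq; rewrite ?zrange_uniq //.
- by move=> x y _ _; apply: oppr_inj.
- by move=> b; rewrite !mem_zrange abszN oppr_eq0 => -> ->.
move=> b; rewrite mem_zrange => b_le_M b_neq0; exists (- b); rewrite ?opprK //.
by rewrite mem_zrange abszN b_le_M oppr_eq0.
Qed.

Lemma sum_zrange_divisors (M : nat) (K : int -> C) (T : nat -> int -> C) :
    (forall a, (M < `|a|)%N -> K a = 0) ->
  \sum_(a <- zrange M | a != 0) K a * \sum_(l <- divisors `|a|%N) T l a =
  \sum_(1 <= l < M.+1) \sum_(b <- zrange M | b != 0) K (b * l%:Z) * T l (b * l%:Z).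
Proof.
move=> K_supp; rewrite big_seq_cond.
rewrite (eq_bigr (fun a => \sum_(1 <= l < M.+1 | (l %| `|a|)%N) K a * T l a)); last first.
  move=> a /andP[]; rewrite mem_zrange -absz_gt0 => a_le_M a_gt0.
  rewrite mulr_sumr (big_divisors_nat (M := M)) // => d /(dvdn_leq a_gt0) d_le_a.
  by rewrite ltnNge (leq_trans d_le_a).
rewrite (exchange_big_dep xpredT) //=; apply: eq_big_nat => l /andP[l_gt0 _].
rewrite [RHS](bigID (fun b : int => (`|(b * l%:Z)%R| <= M)%N)) /=.
rewrite [X in _ = _ + X]big1 ?addr0 => [|b /andP[_ bl_gt_M]]; last by rewrite K_supp ?mul0r // ltnNge.
symmetry; apply: (@big_reindex_seq _ _ _ _ _ _ _ (fun b => b * l%:Z)); rewrite ?zrange_uniq //.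
- by move=> x y _ _; apply: mulIf; rewrite -lt0n.
- move=> b _ /andP[b_neq0 bl_le_M].
  by rewrite mem_zrange bl_le_M mulf_neq0 -?lt0n //= abszM dvdn_mull.
move=> a; rewrite mem_zrange => a_le_M /andP[/andP[_ a_neq0] l_dvd_a].
have /dvdzP[b aE] : (l%:Z %| a)%Z by rewrite dvdzE.
exists b => //; move: a_le_M a_neq0; rewrite aE !mem_zrange abszM => bl_le_M bl_neq0.
rewrite bl_le_M andbT (leq_trans _ bl_le_M) ?leq_pmulr //=.
by apply: contraNneq bl_neq0 => ->; rewrite mul0r.
Qed.

Lemma eq_qB (q j : nat) (k : int) : (0 < q)%N -> (j <= q)%N ->
  eq_ q ((q - j)%N%:R * k%:~R : R) = eq_ q (- (j%:R * k%:~R)).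
Proof.
move=> q_gt0 j_le_q; rewrite /eq_ natrB //.
have qR : (q%:R : R) != 0 by rewrite pnatr_eq0 -lt0n.
have -> : (q%:R - j%:R) * k%:~R / q%:R = k%:~R + (- (j%:R * k%:~R)) / q%:R :> R by field.
by rewrite eeD ee_int mul1r.
Qed.

Lemma ee_addN (x : R) : ee x + ee (- x) = (cos (2 * pi * x) *+ 2)%:C.
Proof.
rewrite /ee mulrN cosN sinN /=.
by apply/eqP; rewrite eq_complex /= mulr2n subrr !eqxx.
Qed.

Lemma sum_m_eq_rev (N l d q j : nat) : (0 < q)%N -> (j <= q)%N ->
  sum_m N l d (fun m => eq_ q (j%:R * d%:R * m%:R : R)) +
  sum_m N l d (fun m => eq_ q ((q - j)%N%:R * d%:R * m%:R : R)) =
    sum_m N l d (fun m => (cos (2 * pi * (j * d * m)%:R / q%:R : R))%:C) *+ 2.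
Proof.
move=> q_gt0 j_le_q; rewrite /sum_m -big_split -sumrMnl; apply: eq_bigr => m _ /=.
have dmE : (d%:R * m%:R : R) = ((d * m)%N%:Z)%:~R by rewrite -pmulrn natrM.
rewrite -[(q - j)%N%:R * _ * _]mulrA dmE eq_qB // -dmE mulrA /eq_ mulNr ee_addN rmorphMn.
by rewrite !natrM mulrA.
Qed.

Lemma sum_nat_rev_pair (V : numDomainType) (q : nat) (X Y S : nat -> V) :
    (forall j, (0 < j < q)%N -> X j + X (q - j)%N = Y j *+ 2) ->
    (forall j, (0 < j < q)%N -> S (q - j)%N = S j) ->
  \sum_(1 <= j < q) X j * S j = \sum_(1 <= j < q) Y j * S j.
Proof.
move=> XY S_rev; apply/eqP; rewrite -(eqr_pMn2r (_ : 0 < 2)%N) //; apply/eqP.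
rewrite -[RHS]sumrMnl mulr2n [X in _ + X = _]big_nat_rev /= -big_split /=.
apply: eq_big_nat => j j_range; rewrite add1n subSS S_rev //.
by rewrite -mulrDl XY // mulrnAl.
Qed.

Lemma sum_zrange_cos (N M : nat) (K : int -> C) (l d q : nat) (c : C) :
    (forall a, K (- a) = K a) -> (0 < l)%N -> (0 < q)%N ->
  \sum_(b <- zrange M | b != 0) K (b * l%:Z) * (c * \sum_(1 <= j < q)
      eq_ q (- (j%:R * (b * l%:Z)%:~R) / l%:R) *
      sum_m N l d (fun m => eq_ q (j%:R * d%:R * m%:R))) =
  c * \sum_(1 <= j < q) sum_m N l d (fun m => (cos (2 * pi * (j * d * m)%:R / q%:R))%:C *
        sum_nz M (fun a => K (a * l%:Z) * eq_ q (j%:R * a%:~R))).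
Proof.
move=> K_even l_gt0 q_gt0; have lR : (l%:R : R) != 0 by rewrite pnatr_eq0 -lt0n.
pose S j := \sum_(b <- zrange M | b != 0) K (b * l%:Z) * eq_ q (j%:R * b%:~R).
have S_opp j : \sum_(b <- zrange M | b != 0) K (b * l%:Z) * eq_ q (- (j%:R * b%:~R)) = S j.
  rewrite -sum_zrangeN; apply: eq_bigr => b _.
  by rewrite mulNr K_even intrN mulrN opprK.
pose X j := sum_m N l d (fun m => eq_ q (j%:R * d%:R * m%:R : R)).
transitivity (c * \sum_(b <- zrange M | b != 0) \sum_(1 <= j < q)
    X j * (K (b * l%:Z) * eq_ q (- (j%:R * b%:~R)))).
  rewrite [RHS]mulr_sumr; apply: eq_bigr => b _; rewrite mulrCA; congr (c * _).
  rewrite mulr_sumr; apply: eq_bigr => j _.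
  rewrite intrM -[(l%:Z)%:~R]/(l%:R : R).
  have -> : (- (j%:R * (b%:~R * l%:R)) / l%:R : R) = - (j%:R * b%:~R) by field.
  by rewrite [RHS]mulrC mulrA.
rewrite exchange_big /=; under eq_bigr do rewrite -mulr_sumr S_opp.
congr (c * _); rewrite (@sum_nat_rev_pair _ _ _
    (fun j => sum_m N l d (fun m => (cos (2 * pi * (j * d * m)%:R / q%:R))%:C))).
- by apply: eq_bigr => j _; rewrite /sum_m -mulr_suml sum_nzE.
- by move=> j /andP[_ /ltnW]; apply: sum_m_eq_rev.
move=> j /andP[_ /ltnW j_le_q]; rewrite -[RHS]S_opp; apply: eq_bigr => b _.
by rewrite eq_qB.
Qed.

Lemma exchange_sum_cop (Q : nat) (r : seq int) (P : pred int) (F : int -> nat -> nat -> C) :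
  \sum_(b <- r | P b) sum_cop Q (F b) = sum_cop Q (fun d q => \sum_(b <- r | P b) F b d q).
Proof. by rewrite /sum_cop exchange_big; apply: eq_bigr => d _; rewrite exchange_big. Qed.

Lemma mulr_sum_cop (Q : nat) (x : C) (F : nat -> nat -> C) :
  x * sum_cop Q F = sum_cop Q (fun d q => x * F d q).
Proof. by rewrite /sum_cop mulr_sumr; apply: eq_bigr => d _; rewrite mulr_sumr. Qed.

Lemma eq_sum_cop (Q : nat) (F G : nat -> nat -> C) :
  (forall d q, (0 < d)%N -> (0 < q)%N -> F d q = G d q) -> sum_cop Q F = sum_cop Q G.
Proof.
move=> FG; rewrite /sum_cop; apply: eq_big_nat => d /andP[d_gt0 _].
rewrite big_seq_cond [RHS]big_seq_cond; apply: eq_bigr => q /andP[].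
by rewrite mem_index_iota => /andP[q_gt0 _] _; apply: FG.
Qed.

End Averaging.

Theorem lemma3 (R : realType) (N h Q : nat) (g : nat -> R)
    (hg : forall q : nat, (Q < q)%N -> g q = 0) :
  (forall a : int, a != 0 -> a <= N%:Z ->
     (Cf (convf g) N a)%:C = MT g N Q a + Rf g N Q a) /\
  (forall K : int -> R[i],
     (forall a : int, K (- a) = K a) ->
     (forall a : int, (2 * h < `|a|)%N -> K a = 0) ->
     K 0 = (2 * h)%:R ->
     (2 * h <= N)%N ->
     sum_nz (2 * h) (fun a => K a * Rf g N Q a) + K 0 * (Cf (convf g) N 0)%:C =
     \sum_(1 <= l < (2 * h).+1) sum_cop Q (fun d q =>
        (g (l * d)%N * g (l * q)%N / q%:R)%:C *
        \sum_(1 <= j < q)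
          sum_m N l d (fun m =>
            (cos (2 * pi * (j * d * m)%:R / q%:R))%:C *
            sum_nz (2 * h) (fun a => K (a * l%:Z) * eq_ q (j%:R * a%:~R))))
     + (2 * h)%:R * (Cf (convf g) N 0)%:C).
Proof.
split=> [a a_neq0 a_le_N|K K_even K_supp K0 _].
  by rewrite (Cf_convf_count hg) // MT_add_Rf // (sum_count_dvd2_gcd hg).
rewrite K0 sum_nzE /Rf sum_zrange_divisors //; congr (_ + _).
apply: eq_big_nat => l /andP[l_gt0 _]; under eq_bigr do rewrite mulr_sum_cop.
rewrite exchange_sum_cop; apply: eq_sum_cop => d q _ q_gt0.
exact: sum_zrange_cos.
Qed.
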